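(* Let $(G,\preceq)$ be a cc sponge group with positive cone $C=\{x\in G\mid\mathbf{1}\preceq x\}$, and let $H$ be a subgroup of $G$ such that (i) for all $q,r\in G$, if $\mathbf{1}\preceq q$, $\mathbf{1}\preceq r$ and $q\cdot r\in H$, then $q\in H$ and $r\in H$; and (ii) for every $z\in G$ there is $h\in H$ with $R(z)\cap C\cdot H\subseteq R(h)$, where $R(z)=\{y\in G\mid z\preceq y\}$. Define the relation $\sqsubseteq$ on $G/H=\{x\cdot H\mid x\in G\}$ by $\overline{x}\sqsubseteq\overline{y}\iff x^{-1}\cdot y\in C\cdot H$ (where $\overline{x}=x\cdot H$). Then $(G/H,\sqsubseteq)$ is a cc sponge. If $H$ is a normal subgroup of $G$, then $(G/H,\sqsubseteq)$ is a cc sponge group.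
   Context: An orientation is a reflexive, antisymmetric binary relation. An oriented group is a group $G$ (operation $\cdot$, neutral element $\mathbf{1}$) with an orientation $\preceq$ such that $x\preceq y$ implies $x\cdot z\preceq y\cdot z$ and $z\cdot x\preceq z\cdot y$. A subset $P$ is right-bounded if some $s$ has $p\preceq s$ for all $p\in P$; the join of $P$ is an $x$ with $p\preceq x$ for all $p\in P$ and $x\preceq y$ whenever $p\preceq y$ for all $p\in P$. An oriented set is a cc sponge if every nonempty right-bounded subset has a join (equivalently for these structures, every nonempty left-bounded subset has a meet). A cc sponge group is an oriented group that is a cc sponge. *)

Section Defs.
Context {G : Type}.

Definition is_group (mul : G -> G -> G) (e : G) (inv : G -> G) : Prop :=
  (forall x y z, mul x (mul y z) = mul (mul x y) z) /\
  (forall x, mul e x = x) /\ (forall x, mul x e = x) /\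
  (forall x, mul (inv x) x = e) /\ (forall x, mul x (inv x) = e).

Definition orientation {T : Type} (le : T -> T -> Prop) : Prop :=
  (forall x, le x x) /\ (forall x y, le x y -> le y x -> x = y).

Definition right_bounded {T : Type} (le : T -> T -> Prop) (P : T -> Prop) : Prop :=
  exists s, forall p, P p -> le p s.

Definition is_join {T : Type} (le : T -> T -> Prop) (P : T -> Prop) (x : T) : Prop :=
  (forall p, P p -> le p x) /\
  (forall y, (forall p, P p -> le p y) -> le x y).

Definition cc_sponge {T : Type} (le : T -> T -> Prop) : Prop :=
  orientation le /\
  forall P : T -> Prop, (exists p, P p) -> right_bounded le P ->
    exists x, is_join le P x.

Definition oriented_group (mul : G -> G -> G) (e : G) (inv : G -> G)
  (le : G -> G -> Prop) : Prop :=
  is_group mul e inv /\ orientation le /\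
  (forall x y z, le x y -> le (mul x z) (mul y z) /\ le (mul z x) (mul z y)).

Definition cc_sponge_group (mul : G -> G -> G) (e : G) (inv : G -> G)
  (le : G -> G -> Prop) : Prop :=
  oriented_group mul e inv le /\ cc_sponge le.

Definition is_subgroup (mul : G -> G -> G) (e : G) (inv : G -> G) (H : G -> Prop) : Prop :=
  H e /\ (forall x y, H x -> H y -> H (mul x y)) /\ (forall x, H x -> H (inv x)).

Definition is_normal (mul : G -> G -> G) (inv : G -> G) (H : G -> Prop) : Prop :=
  forall g h, H h -> H (mul (mul g h) (inv g)).

Definition pcone (e : G) (le : G -> G -> Prop) (x : G) : Prop := le e x.

Definition coneH (mul : G -> G -> G) (e : G) (le : G -> G -> Prop) (H : G -> Prop) (z : G) : Prop :=
  exists c h, pcone e le c /\ H h /\ z = mul c h.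

Definition Rset (le : G -> G -> Prop) (z : G) (y : G) : Prop := le z y.

Definition coset (mul : G -> G -> G) (H : G -> Prop) (x : G) : G -> Prop :=
  fun g => exists h, H h /\ g = mul x h.

Definition quot (mul : G -> G -> G) (H : G -> Prop) : Type :=
  { S : G -> Prop | exists x, S = coset mul H x }.

Definition cls (mul : G -> G -> G) (H : G -> Prop) (x : G) : quot mul H :=
  exist _ (coset mul H x) (ex_intro _ x eq_refl).

Definition qle (mul : G -> G -> G) (e : G) (inv : G -> G) (le : G -> G -> Prop)
  (H : G -> Prop) (S T : quot mul H) : Prop :=
  exists x y, proj1_sig S = coset mul H x /\ proj1_sig T = coset mul H y /\
    coneH mul e le H (mul (inv x) y).

End Defs.

(* Write x ≤_H y for x⁻¹y ∈ C·H; this is ⊑ read on representatives, and it does not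
   depend on them because H·C ⊆ C·H (h c = (h c h⁻¹) h).  Antisymmetry: if x⁻¹y = c1 h1
   and y⁻¹x = c2 h2, rewriting h1 c2 = c' h' shows c1 c' ∈ H, so c1 ∈ H by (i) and
   x⁻¹y ∈ H.  Joins: for nonempty bounded P, fix cls p0 ∈ P and let m be the join in G
   of the lower bounds of U = {u | p0 ≼ u and cls u bounds P}.  Every upper bound of P
   has a representative in U, so cls m is the least one; and (ii) applied to x⁻¹p0
   gives for each cls x ∈ P a representative x h that is a lower bound of U, whence
   cls x ⊑ cls m. *)

From Stdlib Require Import FunctionalExtensionality PropExtensionality ProofIrrelevance.

Section Groups.

Variables (G : Type) (mul : G -> G -> G) (e : G) (inv : G -> G).
Hypothesis grp : is_group mul e inv.

Local Notation "x * y" := (mul x y).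
Local Notation "x ^-1" := (inv x) (at level 3, format "x ^-1").

Lemma mulgA x y z : x * (y * z) = x * y * z.
Proof. apply grp. Qed.

Lemma mul1g x : e * x = x.
Proof. apply grp. Qed.

Lemma mulg1 x : x * e = x.
Proof. apply grp. Qed.

Lemma mulVg x : x^-1 * x = e.
Proof. apply grp. Qed.

Lemma mulgV x : x * x^-1 = e.
Proof. apply grp. Qed.

Lemma mulKg x y : x^-1 * (x * y) = y.
Proof. now rewrite mulgA, mulVg, mul1g. Qed.

Lemma mulKVg x y : x * (x^-1 * y) = y.
Proof. now rewrite mulgA, mulgV, mul1g. Qed.

Lemma mulgK x y : x * y * y^-1 = x.
Proof. now rewrite <- mulgA, mulgV, mulg1. Qed.

Lemma mulgKV x y : x * y^-1 * y = x.
Proof. now rewrite <- mulgA, mulVg, mulg1. Qed.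

Lemma inv_eq_of_mul_eq1 x y : x * y = e -> x = y^-1.
Proof. intros Hxy. now rewrite <- (mulgK x y), Hxy, mul1g. Qed.

Lemma invgK x : x^-1^-1 = x.
Proof. symmetry. apply inv_eq_of_mul_eq1, mulgV. Qed.

Lemma invMg x y : (x * y)^-1 = y^-1 * x^-1.
Proof.
  symmetry. apply inv_eq_of_mul_eq1.
  now rewrite <- mulgA, (mulgA (x^-1)), mulVg, mul1g, mulVg.
Qed.

Section Oriented.

Variable le : G -> G -> Prop.
Hypothesis compat :
  forall x y z, le x y -> le (x * z) (y * z) /\ le (z * x) (z * y).

Lemma le_mul2r x y z : le x y -> le (x * z) (y * z).
Proof. intros Hxy. now apply compat. Qed.

Lemma le_mul2l x y z : le x y -> le (z * x) (z * y).
Proof. intros Hxy. now apply compat. Qed.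

Lemma pcone_conj g c : pcone e le c -> pcone e le (g * c * g^-1).
Proof.
  intros Hc. unfold pcone. rewrite <- (mulgV g), <- (mulg1 g) at 1.
  now apply le_mul2r, le_mul2l.
Qed.

Lemma pcone_divl x y : le x y -> pcone e le (x^-1 * y).
Proof. intros Hxy. unfold pcone. rewrite <- (mulVg x). now apply le_mul2l. Qed.

Section Subgroup.

Variable H : G -> Prop.
Hypothesis sub : is_subgroup mul e inv H.

Local Notation CH := (coneH mul e le H).
Local Notation qle := (qle mul e inv le H).
Local Notation cls := (cls mul H).
Local Notation coset := (coset mul H).

Lemma subgroup1 : H e.
Proof. apply sub. Qed.

Lemma subgroupM x y : H x -> H y -> H (x * y).
Proof. apply sub. Qed.

Lemma subgroupV x : H x -> H x^-1.
Proof. apply sub. Qed.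

Lemma coneH_pcone c : pcone e le c -> CH c.
Proof. intros Hc. exists c, e. repeat split; auto using subgroup1. now rewrite mulg1. Qed.

Lemma coneH_mulr z h : CH z -> H h -> CH (z * h).
Proof.
  intros [c [h1 [Hc [Hh1 ->]]]] Hh. exists c, (h1 * h).
  repeat split; auto using subgroupM. now rewrite mulgA.
Qed.

Lemma coneH_mull h z : H h -> CH z -> CH (h * z).
Proof.
  intros Hh [c [h1 [Hc [Hh1 ->]]]]. exists (h * c * h^-1), (h * h1).
  repeat split; auto using pcone_conj, subgroupM.
  now rewrite !mulgA, mulgKV.
Qed.

Definition rep_le x y := CH (x^-1 * y).

Lemma coset_eq x y : coset x = coset y <-> H (x^-1 * y).
Proof.
  split.
  - intros Exy.
    assert (Hy : coset y y) by (exists e; split; [apply subgroup1 | now rewrite mulg1]).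
    rewrite <- Exy in Hy. destruct Hy as [h [Hh ->]]. now rewrite mulKg.
  - intros Hxy. apply functional_extensionality. intros g.
    apply propositional_extensionality. split; intros [h [Hh ->]].
    + exists ((x^-1 * y)^-1 * h). split; [auto using subgroupM, subgroupV |].
      now rewrite invMg, invgK, mulgA, mulgA, mulgV, mul1g.
    + exists (x^-1 * y * h). split; [auto using subgroupM |]. now rewrite <- mulgA, mulKVg.
Qed.

Lemma cls_eq x y : cls x = cls y <-> H (x^-1 * y).
Proof.
  rewrite <- coset_eq. split.
  - intros Exy. exact (f_equal (@proj1_sig _ _) Exy).
  - intros Exy. now apply subset_eq_compat.
Qed.

Lemma quot_cls (S : quot mul H) : exists x, S = cls x.
Proof.
  destruct S as [S [x ->]]. exists x. now apply subset_eq_compat.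
Qed.

Lemma rep_le_coset x y x' y' :
  coset x = coset x' -> coset y = coset y' ->
  rep_le x y -> rep_le x' y'.
Proof.
  rewrite !coset_eq. intros Hx Hy Hxy. unfold rep_le.
  replace (x'^-1 * y') with ((x^-1 * x')^-1 * (x^-1 * y) * (y^-1 * y')).
  - auto using coneH_mulr, coneH_mull, subgroupV.
  - now rewrite invMg, invgK, <- !mulgA, mulKVg, mulKVg.
Qed.

Lemma qle_cls x y :
  qle (cls x) (cls y) <-> rep_le x y.
Proof.
  split.
  - intros [a [b [Ea [Eb Hab]]]]. simpl in Ea, Eb.
    now apply (rep_le_coset a b).
  - intros Hxy. now exists x, y.
Qed.

Lemma rep_le_shift p t : rep_le p t -> exists u, le p u /\ cls u = cls t.
Proof.
  intros [c [h [Hc [Hh Ept]]]]. exists (p * c). split.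
  - rewrite <- (mulg1 p) at 1. now apply le_mul2l.
  - apply cls_eq. now rewrite invMg, <- mulgA, Ept, mulKg.
Qed.

Lemma qle_mul2l x y z :
  qle (cls x) (cls y) ->
  qle (cls (z * x)) (cls (z * y)).
Proof. rewrite !qle_cls. unfold rep_le. now rewrite invMg, <- mulgA, mulKg. Qed.

Lemma qle_mul2r x y z :
  is_normal mul inv H ->
  qle (cls x) (cls y) ->
  qle (cls (x * z)) (cls (y * z)).
Proof.
  intros Hnorm. rewrite !qle_cls. intros [c [h [Hc [Hh Exy]]]].
  exists (z^-1 * c * z^-1^-1), (z^-1 * h * z^-1^-1).
  repeat split; auto using pcone_conj.
  rewrite invMg, <- mulgA, (mulgA x^-1), Exy, invgK.
  now rewrite <- !mulgA, (mulgA z), mulgV, mul1g.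
Qed.

Section Sponge.

Hypothesis le_refl : forall x, le x x.
Hypothesis le_join :
  forall P, (exists p, P p) -> right_bounded le P -> exists m, is_join le P m.
Hypothesis cone_factors_in_H :
  forall q r, pcone e le q -> pcone e le r -> H (q * r) -> H q /\ H r.
Hypothesis coneH_lower_bound : forall z, exists h, H h /\
  forall y, Rset le z y -> CH y -> Rset le h y.

Lemma coneH_antisym z : CH z -> CH z^-1 -> H z.
Proof.
  intros [c1 [h1 [Hc1 [Hh1 ->]]]] [c2 [h2 [Hc2 [Hh2 Einv]]]].
  destruct (coneH_mull h1 c2 Hh1 (coneH_pcone c2 Hc2))
    as [c' [h' [Hc' [Hh' Eh1c2]]]].
  assert (Ee : c1 * c' * (h' * h2) = e).
  { rewrite <- (mulgV (c1 * h1)), Einv.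
    now rewrite <- !mulgA, (mulgA h1), Eh1c2, <- mulgA. }
  apply inv_eq_of_mul_eq1 in Ee.
  assert (Hc1c' : H (c1 * c')) by (rewrite Ee; auto using subgroupV, subgroupM).
  apply subgroupM; [apply (cone_factors_in_H c1 c' Hc1 Hc' Hc1c') | exact Hh1].
Qed.

Lemma qle_refl S : qle S S.
Proof.
  destruct (quot_cls S) as [x ->]. apply qle_cls.
  unfold rep_le. rewrite mulVg. apply coneH_pcone, le_refl.
Qed.

Lemma qle_antisym S T : qle S T -> qle T S -> S = T.
Proof.
  destruct (quot_cls S) as [x ->], (quot_cls T) as [y ->].
  rewrite !qle_cls. intros Hxy Hyx.
  apply cls_eq, coneH_antisym; [exact Hxy |].
  now rewrite invMg, invgK.
Qed.

Lemma exists_rep_below x p0 : exists k, cls k = cls x /\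
  forall u, le p0 u -> rep_le x u -> le k u.
Proof.
  destruct (coneH_lower_bound (x^-1 * p0)) as [h [Hh Hbelow]].
  exists (x * h). split.
  - apply cls_eq. rewrite invMg, <- mulgA, mulVg, mulg1.
    now apply subgroupV.
  - intros u Hp0u Hxu. rewrite <- (mulKVg x u).
    apply le_mul2l, Hbelow; [| exact Hxu].
    now apply le_mul2l.
Qed.

Lemma qle_join P S0 : P S0 -> right_bounded qle P -> exists X, is_join qle P X.
Proof.
  intros HS0 [B HB].
  destruct (quot_cls S0) as [p0 ->], (quot_cls B) as [s ->].
  set (U := fun u => le p0 u /\ forall S, P S -> qle S (cls u)).
  assert (U_of_bound : forall t, (forall S, P S -> qle S (cls t)) -> exists u, U u /\ cls u = cls t).
  { intros t Ht.
    destruct (rep_le_shift p0 t) as [u [Hp0u Eut]].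
    - now apply qle_cls, Ht.
    - exists u. split; [split; [exact Hp0u |] | exact Eut].
      intros S HS. rewrite Eut. now apply Ht. }
  destruct (U_of_bound s HB) as [u0 [Uu0 _]].
  destruct (le_join (fun l => forall u, U u -> le l u)) as [m [m_ub m_least]];
    [exists p0; now intros u [Hp0u _] | exists u0; intros l Hl; now apply Hl |].
  exists (cls m). split.
  - intros S HS. destruct (quot_cls S) as [x ->].
    destruct (exists_rep_below x p0) as [k [Ekx Hk]]. rewrite <- Ekx.
    apply qle_cls, coneH_pcone, pcone_divl, m_ub.
    intros u [Hp0u Hu]. apply Hk; [exact Hp0u |].
    now apply qle_cls, Hu.
  - intros T HT. destruct (quot_cls T) as [t ->].
    destruct (U_of_bound t HT) as [u [Uu <-]].
    apply qle_cls, coneH_pcone, pcone_divl.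
    apply m_least. intros l Hl. now apply Hl.
Qed.

Lemma qle_cc_sponge : cc_sponge qle.
Proof.
  split.
  - split; [exact qle_refl | exact qle_antisym].
  - intros P [S0 HS0]. now apply qle_join with S0.
Qed.

End Sponge.

End Subgroup.

End Oriented.

End Groups.

Theorem mainTheorem12 (G : Type) (mul : G -> G -> G) (e : G) (inv : G -> G)
  (le : G -> G -> Prop) (H : G -> Prop)
  (hG : cc_sponge_group mul e inv le)
  (hH : is_subgroup mul e inv H)
  (hi : forall q r, pcone e le q -> pcone e le r -> H (mul q r) -> H q /\ H r)
  (hii : forall z, exists h, H h /\
     forall y, Rset le z y -> coneH mul e le H y -> Rset le h y) :
  cc_sponge (qle mul e inv le H) /\
  (is_normal mul inv H ->
     (* G/H with coset multiplication xbar.ybar = (xy)bar is an oriented group,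
        i.e. [= is compatible with the multiplication on both sides *)
     forall x y z, qle mul e inv le H (cls mul H x) (cls mul H y) ->
       qle mul e inv le H (cls mul H (mul x z)) (cls mul H (mul y z)) /\
       qle mul e inv le H (cls mul H (mul z x)) (cls mul H (mul z y))).
Proof.
  destruct hG as [[grp [_ compat]] [[le_refl _] le_join]].
  split.
  - now apply qle_cc_sponge.
  - intros Hnorm x y z Hxy. split.
    + now apply qle_mul2r.
    + now apply qle_mul2l.
Qed.
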